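(* Let $p$ be an odd prime and let $n,s$ be positive integers such that $2n/s\geq 3$ is an odd integer; put $q=p^n$, $d=p^s$. Fix $\mu\in\mathbb{F}_{q^2}\setminus\mathbb{F}_q$ such that $\mu^d=u_1+u_2\mu$ with $u_1,u_2\in\mathbb{F}_q$ and $u_2$ a $(d-1)$-th power in $\mathbb{F}_{q^2}$. Fix a partition $\mathbb{F}_q^*=\mathbb{F}_q^+\cup\mathbb{F}_q^-$ such that $a\in\mathbb{F}_q^+$ iff $-a\in\mathbb{F}_q^-$. Then \[ I^+=\{(a^d+a,\,x_1+x_2\mu): a,x_1\in\mathbb{F}_q,\ x_2\in\mathbb{F}_q^+\} \] is an independent set in $\mathcal{A}_{q^2,d}$, and likewise $I^-=\{(a^d+a,\,x_1+x_2\mu): a,x_1\in\mathbb{F}_q,\ x_2\in\mathbb{F}_q^-\}$ is an independent set in $\mathcal{A}_{q^2,d}$.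
   Context: The map $x\mapsto x^d+x$ is a bijection of $\mathbb{F}_{q^2}$. The graph $\mathcal{A}_{q^2,d}$ has vertex set $\mathbb{F}_{q^2}\times\mathbb{F}_{q^2}$; writing vertices as $(a^d+a,x)$ and $(b^d+b,y)$ with $a,b,x,y\in\mathbb{F}_{q^2}$ (uniquely), two distinct vertices are adjacent iff $a^db+ab^d=x+y$. $\mathbb{F}_q$ is the subfield of $\mathbb{F}_{q^2}$ of order $q$. *)

From HB Require Import structures.
From mathcomp Require Import all_boot all_order all_algebra all_field.
Set Implicit Arguments. Unset Strict Implicit. Unset Printing Implicit Defensive.
Import GRing.Theory.
Local Open Scope ring_scope.

Definition in_subfield (F : finFieldType) (q : nat) (x : F) : bool := x ^+ q == x.

(* Adjacency in A_{q^2,d}: vertices are pairs (u, x) in F x F; writing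
   u = a^d + a, u' = b^d + b (unique since x |-> x^d + x is a bijection),
   two distinct vertices are adjacent iff a^d b + a b^d = x + y. *)
Definition A_adj (F : finFieldType) (d : nat) (v w : F * F) : Prop :=
  v <> w /\
  exists a b : F, v.1 = a ^+ d + a /\ w.1 = b ^+ d + b /\
                  a ^+ d * b + a * b ^+ d = v.2 + w.2.

Definition independent_set (F : finFieldType) (d : nat) (I : F * F -> Prop) : Prop :=
  forall v w, I v -> I w -> ~ A_adj d v w.

Definition I_set (F : finFieldType) (q d : nat) (mu : F) (Fsign : pred F)
  (v : F * F) : Prop :=
  exists a x1 x2 : F, in_subfield q a /\ in_subfield q x1 /\ Fsign x2 /\
    v = (a ^+ d + a, x1 + x2 * mu).

From HB Require Import structures.
From mathcomp Require Import all_boot all_order all_algebra all_field.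
From mathcomp Require Import ring.
Import GRing.Theory.
Local Open Scope ring_scope.
Set Implicit Arguments.
Unset Strict Implicit.

(** Suppose [(a^d + a, x1 + x2 mu)] and [(b^d + b, y1 + y2 mu)] in [I^+] are
    adjacent.  Since [x |-> x^d + x] is injective, the adjacency relation
    reads [a^d b + a b^d = (x1 + y1) + (x2 + y2) mu] with [a, b, x1, y1, x2,
    y2] in [F_q]; as [mu] is not in [F_q], this forces [y2 = -x2].  But [x2]
    and [-x2] never lie in the same half [F_q^+] or [F_q^-] of the partition.
    Injectivity holds because a root of [z^d = -z] satisfies
    [z = z^(q^2) = z^(d^(2n/s)) = (-1)^(2n/s) z = -z], and [p] is odd. *)

Section PowerOfCharacteristic.

Variables (F : finFieldType) (p : nat).
Hypothesis pcharFp : p \in [pchar F].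

Lemma pnat_pchar_expn k : [pchar F].-nat (p ^ k)%N.
Proof.
rewrite (eq_pnat _ (pcharf_eq pcharFp)) pnatX pnat_id ?orbT //.
exact: pcharf_prime pcharFp.
Qed.

Lemma in_subfieldD k (x y : F) : in_subfield (p ^ k) x ->
  in_subfield (p ^ k) y -> in_subfield (p ^ k) (x + y).
Proof.
by rewrite /in_subfield (exprDn_pchar _ _ (pnat_pchar_expn k)) => /eqP-> /eqP->.
Qed.

Lemma in_subfieldN k (x : F) : in_subfield (p ^ k) x -> in_subfield (p ^ k) (- x).
Proof. by rewrite /in_subfield (exprNn_pchar _ (pnat_pchar_expn k)) => /eqP->. Qed.

Lemma in_subfieldB k (x y : F) : in_subfield (p ^ k) x ->
  in_subfield (p ^ k) y -> in_subfield (p ^ k) (x - y).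
Proof. by move=> Hx /in_subfieldN; apply: in_subfieldD. Qed.

Hypothesis p_odd : odd p.

Lemma pchar_two_neq0 : 2%:R != 0 :> F.
Proof.
apply: contraTneq p_odd => two0.
have p_prime := pcharf_prime pcharFp.
by move: (dvdn_pcharf pcharFp 2); rewrite two0 eqxx dvdn_prime2 // => /eqP->.
Qed.

Section OddDegreeOverFixedField.

Variables (s k : nat).
Hypotheses (k_odd : odd k) (cardF : #|F| = (p ^ (s * k))%N).

Lemma expr_eq_opp_eq0 (z : F) : z ^+ (p ^ s) = - z -> z = 0.
Proof.
move=> zd.
have iter_zd j : z ^+ (p ^ (s * j)) = (-1) ^+ j * z.
  elim: j => [|j IHj]; first by rewrite muln0 mul1r.
  rewrite mulnS expnD exprM zd (exprNn_pchar _ (pnat_pchar_expn _)) IHj.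
  by rewrite exprS mulN1r mulNr.
have : z = - z by rewrite -{1}[z]expf_card cardF iter_zd -signr_odd k_odd mulN1r.
move/eqP; rewrite -subr_eq0 opprK -mulr2n -mulr_natl mulf_eq0.
by rewrite (negPf pchar_two_neq0) => /eqP.
Qed.

Lemma expr_addr_inj : injective (fun x : F => x ^+ (p ^ s) + x).
Proof.
move=> a b /= eq_ab; apply/eqP; rewrite -subr_eq0; apply/eqP.
apply: expr_eq_opp_eq0.
rewrite (exprDn_pchar _ _ (pnat_pchar_expn s)) (exprNn_pchar _ (pnat_pchar_expn s)).
by rewrite -[a ^+ _](addrK a) eq_ab; ring.
Qed.

End OddDegreeOverFixedField.

End PowerOfCharacteristic.

Lemma in_subfieldM (F : finFieldType) q (x y : F) :
  in_subfield q x -> in_subfield q y -> in_subfield q (x * y).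
Proof. by rewrite /in_subfield exprMn => /eqP-> /eqP->. Qed.

Lemma in_subfieldX (F : finFieldType) q m (x : F) :
  in_subfield q x -> in_subfield q (x ^+ m).
Proof. by rewrite /in_subfield exprAC => /eqP->. Qed.

Lemma in_subfield_mulIl (F : finFieldType) q (c x : F) : c != 0 ->
  in_subfield q c -> in_subfield q (c * x) -> in_subfield q x.
Proof. by move=> c0; rewrite /in_subfield exprMn => /eqP-> /eqP/(mulfI c0)->. Qed.

Section IndependentHalf.

Variables (F : finFieldType) (p k d : nat) (mu : F) (S : pred F).
Hypotheses (pcharFp : p \in [pchar F]) (mu_notin : ~~ in_subfield (p ^ k) mu).
Hypothesis inj_d : injective (fun x : F => x ^+ d + x).
Hypothesis S_sub : forall x, S x -> in_subfield (p ^ k) x.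

Lemma I_set_adj_opp v w :
  I_set (p ^ k) d mu S v -> I_set (p ^ k) d mu S w -> A_adj d v w ->
  exists x2, S x2 /\ S (- x2).
Proof.
move=> [a [x1 [x2 [Fa [Fx1 [Sx2 ->]]]]]] [b [y1 [y2 [Fb [Fy1 [Sy2 ->]]]]]].
move=> [_ [a' [b' [/= /inj_d <- [/inj_d <- adj]]]]].
exists x2; split=> //.
suff -> : - x2 = y2 by [].
apply/eqP; rewrite eq_sym -subr_eq0 opprK addrC; apply: contraNT mu_notin => nz.
pose c := a ^+ d * b + a * b ^+ d - x1 - y1.
have cE : c = (x2 + y2) * mu by rewrite /c adj; ring.
have Fc : in_subfield (p ^ k) c.
  rewrite /c; do 2![apply: (in_subfieldB pcharFp) => //].
  by apply: (in_subfieldD pcharFp); apply: in_subfieldM => //; apply: in_subfieldX.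
apply: (in_subfield_mulIl nz); first by apply: (in_subfieldD pcharFp); apply: S_sub.
by rewrite -cE.
Qed.

Lemma independent_set_I_set : (forall x, S x -> ~~ S (- x)) ->
  independent_set d (I_set (p ^ k) d mu S).
Proof.
move=> S_opp v w Iv Iw adj.
have [x2 [Sx2 Sx2N]] := I_set_adj_opp Iv Iw adj.
by move: (S_opp _ Sx2); rewrite Sx2N.
Qed.

End IndependentHalf.

Theorem lemma7 (p n s : nat) (F : finFieldType)
  (Hp : prime p) (Hpodd : odd p) (Hn : (0 < n)%N) (Hs : (0 < s)%N)
  (Hdiv : (s %| 2 * n)%N) (Hodd : odd (2 * n %/ s)) (H3 : (3 <= 2 * n %/ s)%N)
  (HF : #|F| = ((p ^ n) ^ 2)%N)
  (mu u1 u2 : F)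
  (Hmu : ~~ in_subfield (p ^ n) mu)
  (Hu1 : in_subfield (p ^ n) u1) (Hu2 : in_subfield (p ^ n) u2)
  (Hmud : mu ^+ (p ^ s) = u1 + u2 * mu)
  (Hu2pow : exists w : F, u2 = w ^+ (p ^ s - 1))
  (Fplus Fminus : pred F)
  (Hpart : forall a : F, in_subfield (p ^ n) a -> a != 0 ->
             (a \in Fplus) (+) (a \in Fminus))
  (Hplus_sub : forall a : F, a \in Fplus -> in_subfield (p ^ n) a && (a != 0))
  (Hminus_sub : forall a : F, a \in Fminus -> in_subfield (p ^ n) a && (a != 0))
  (Hsym : forall a : F, (a \in Fplus) = (- a \in Fminus)) :
  independent_set (p ^ s) (I_set (p ^ n) (p ^ s) mu Fplus) /\
  independent_set (p ^ s) (I_set (p ^ n) (p ^ s) mu Fminus).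
Proof.
have cardF : #|F| = (p ^ (s * (2 * n %/ s)))%N.
  by rewrite mulnC divnK // HF -expnM mulnC.
have pcharFp : p \in [pchar F] := card_finPcharP cardF Hp.
have inj := expr_addr_inj pcharFp Hpodd Hodd cardF.
have not_both a : a \in Fplus -> a \in Fminus -> False.
  move=> Pa Ma; have /andP[Fa a0] := Hplus_sub a Pa.
  by move: (Hpart _ Fa a0); rewrite Pa Ma.
split; apply: (independent_set_I_set pcharFp Hmu inj).
- by move=> x /Hplus_sub/andP[].
- by move=> x Px; apply/negP=> PxN; apply: (not_both x Px); rewrite -[x]opprK -Hsym.
- by move=> x /Hminus_sub/andP[].
- by move=> x Mx; apply/negP=> MxN; apply: (not_both x) => //; rewrite Hsym.
Qed.
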